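(* Let $G$ be a connected graph on $n$ vertices. Then $b(G^2)\le \lceil \sqrt{n}\,\rceil$.
   Context: $G^2$ is the graph on $V(G)$ in which distinct $u,v$ are adjacent iff $d_G(u,v)\le 2$. Graph burning: in each round $i$ a vertex (source) is chosen and burned, and simultaneously every unburned neighbour of a vertex burned by the end of round $i-1$ becomes burned; burned vertices stay burned. The burning number $b(G)$ is the minimum number of rounds needed to burn all vertices. *)

From mathcomp Require Import all_boot.
Set Implicit Arguments. Unset Strict Implicit. Unset Printing Implicit Defensive.

Definition simple_graph (T : finType) (e : rel T) : Prop :=
  symmetric e /\ irreflexive e.

Definition connected_graph (T : finType) (e : rel T) : Prop :=
  forall u v : T, connect e u v.

Definition sq_graph (T : finType) (e : rel T) : rel T :=
  fun u v => (u != v) && (e u v || [exists w, e u w && e w v]).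

Definition burn_step (T : finType) (e : rel T) (B : {set T}) (x : T) : {set T} :=
  x |: (B :|: [set v | [exists u in B, e u v]]).

Definition burned (T : finType) (e : rel T) (s : seq T) : {set T} :=
  foldl (burn_step e) set0 s.

Definition burns (T : finType) (e : rel T) (s : seq T) : bool :=
  burned e s == [set: T].

Lemma burned_sub (T : finType) (e : rel T) (s : seq T) (B : {set T}) :
  B \subset foldl (burn_step e) B s /\
  {subset s <= foldl (burn_step e) B s}.
Proof.
elim: s B => [|x s IH] B /=; first by split=> //.
have [H1 H2] := IH (burn_step e B x).
split.
  apply: subset_trans H1; rewrite /burn_step.
  by apply/subsetP=> y yB; rewrite !inE yB orbT.
move=> y; rewrite inE => /orP [/eqP -> | ys]; last exact: H2.
by apply: (subsetP H1); rewrite /burn_step !inE eqxx.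
Qed.

Lemma burns_exists (T : finType) (e : rel T) :
  exists k, [exists t : k.-tuple T, burns e t].
Proof.
exists (size (enum T)); apply/existsP; exists (in_tuple (enum T)).
rewrite /burns /burned /=; apply/eqP/setP=> x; rewrite inE.
by have [_ H] := burned_sub e (enum T) set0; apply: H; rewrite mem_enum.
Qed.

Definition burning_number (T : finType) (e : rel T) : nat :=
  ex_minn (burns_exists e).

Lemma ceil_sqrt_exists (n : nat) : exists k, n <= k * k.
Proof. by exists n; case: n => // n; rewrite leq_pmulr. Qed.

Definition ceil_sqrt (n : nat) : nat := ex_minn (ceil_sqrt_exists n).

From mathcomp Require Import all_boot zify.
Set Implicit Arguments. Unset Strict Implicit. Unset Printing Implicit Defensive.

(* Each round of burning in G^2 advances the fire two G-steps, so the source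
   chosen in round i + 1 of k burns the G-ball of radius 2(k - 1 - i) around it.
   It therefore suffices to cover a connected graph on at most k^2 vertices by
   k balls of radii 2(k - 1), ..., 2, 0.  Take a spanning tree and a deepest
   vertex v whose subtree has at least min(2k + 1, n) vertices.  Every child
   subtree of v has at most 2k vertices, so the subtree of v lies within
   distance 2k of v, and removing it leaves a connected graph on at most
   (k + 1)^2 - (2k + 1) = k^2 vertices, which is covered by induction. *)

Definition reach_within (T : Type) (e : rel T) (n : nat) (v w : T) : Prop :=
  exists q, [/\ path e v q, last v q = w & size q <= n].

Lemma reach_within_iter (T : Type) (e : rel T) (f : T -> T) (x : T) n :
  (forall i, i < n -> e (f (iter i f x)) (iter i f x)) ->
  reach_within e n (iter n f x) x.
Proof.
elim: n => [|n IHn] edge; first by exists [::].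
have [q [pq lq sq]] := IHn (fun i lt_in => edge i (ltnW lt_in)).
exists (iter n f x :: q); split=> //=; first by rewrite edge ?pq.
Qed.

Section BurningSquare.

Variables (T : finType) (e : rel T).
Hypothesis e_irr : irreflexive e.

Lemma sq_graph_edge u v : e u v -> sq_graph e u v.
Proof.
by move=> euv; rewrite /sq_graph euv /= andbT; apply: contraTneq euv => ->;
  rewrite e_irr.
Qed.

Lemma sq_graph_path2 u v w : u != w -> e u v -> e v w -> sq_graph e u w.
Proof.
by move=> neq_uw euv evw; rewrite /sq_graph neq_uw; apply/orP; right;
  apply/existsP; exists v; rewrite euv.
Qed.

Lemma subset_burn_step (B : {set T}) x : B \subset burn_step (sq_graph e) B x.
Proof. by apply/subsetP=> y yB; rewrite !inE yB orbT. Qed.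

Lemma mem_burn_step (B : {set T}) x u v :
  u \in B -> sq_graph e u v -> v \in burn_step (sq_graph e) B x.
Proof.
by move=> uB euv; rewrite !inE; apply/orP; right; apply/orP; right;
  apply/existsP; exists u; rewrite uB.
Qed.

Lemma burn_reach_within (s : seq T) (B : {set T}) b w :
  b \in B -> reach_within e (2 * size s) b w ->
  w \in foldl (burn_step (sq_graph e)) B s.
Proof.
move=> bB [q [pq <- sq]]; elim: s B b q bB pq sq => [|x s IHs] B b q bB.
  by case: q.
have subB := subsetP (subset_burn_step B x).
case: q => [|a [|a' q]] /= => [_ _|/andP[eba _] _|/and3P[eba eaa' pq] sq].
- by apply: (subsetP (burned_sub _ s _).1); apply: subB.
- by apply: (IHs _ a [::]) => //; apply: mem_burn_step bB (sq_graph_edge eba).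
have {}sq : size q <= 2 * size s by rewrite mulnS in sq; lia.
have [eq_ba'|neq_ba'] := eqVneq b a'.
  by rewrite -eq_ba' in pq *; exact: IHs (subB b bB) pq sq.
exact: IHs (mem_burn_step _ bB (sq_graph_path2 neq_ba' eba eaa')) pq sq.
Qed.

End BurningSquare.

Definition induced_rel (T : finType) (e : rel T) (S : {set T}) : rel T :=
  [rel a b | [&& a \in S, b \in S & e a b]].

Definition connected_on (T : finType) (e : rel T) (S : {set T}) : Prop :=
  {in S &, forall a b, connect (induced_rel e S) a b}.

Lemma exists_parent_tree (T : finType) (e : rel T) (S : {set T}) r :
  connected_on e S -> r \in S ->
  exists (p : T -> T) (d : T -> nat),
    [/\ {in S, forall w, p w \in S}, p r = r,
        {in S, forall w, w != r -> e (p w) w} &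
        {in S, forall w, w != r -> d (p w) < d w}].
Proof.
move=> connS rS.
(* The disjunct [w \notin S] makes [reach w] satisfiable for every [w], as
   [ex_minn] requires. *)
pose reach w n := [exists q : n.-tuple T,
  path (induced_rel e S) r q && (last r q == w)] || (w \notin S).
have reach_ex w : exists n, reach w n.
  have [wS|wNS] := boolP (w \in S); last by exists 0; rewrite /reach wNS orbT.
  have /connectP[q pq lq] := connS r w rS wS.
  by exists (size q); apply/orP; left; apply/existsP; exists (in_tuple q);
    rewrite pq -lq /=.
pose d w := ex_minn (reach_ex w).
have d_min w n : reach w n -> d w <= n.
  by rewrite /d; case: ex_minnP => k _; apply.
have d_reach w : w \in S -> reach w (d w).
  by rewrite /d; case: ex_minnP.
have d_r : d r = 0.
  apply/eqP; rewrite -leqn0; apply: d_min; apply/orP; left.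
  by apply/existsP; exists [tuple]; rewrite /= eqxx.
have parent_ex w : w \in S -> w != r -> exists u, [&& u \in S, e u w & d u < d w].
  move=> wS neq_wr; move: (d_reach w wS); rewrite /reach wS orbF.
  case/existsP=> q /andP[]; move: (size_tuple q).
  case/lastP: (tval q) => [_ _ /eqP eq_rw|q' x sq].
    by rewrite -eq_rw eqxx in neq_wr.
  rewrite rcons_path last_rcons => /andP[pq' /and3P[uS _ eux]] /eqP eq_xw.
  exists (last r q'); rewrite -sq size_rcons uS -eq_xw eux ltnS d_min //.
  by apply/orP; left; apply/existsP; exists (in_tuple q'); rewrite pq' eqxx.
pose p w := odflt w [pick u | [&& u \in S, e u w & d u < d w]].
exists p, d; split.
- by move=> w wS; rewrite /p; case: pickP => [u /and3P[]|].
- by rewrite /p; case: pickP => [u /and3P[_ _]|//]; rewrite d_r.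
- move=> w wS neq_wr; rewrite /p; case: pickP => [u /and3P[]//|none].
  by have [u] := parent_ex w wS neq_wr; rewrite none.
- move=> w wS neq_wr; rewrite /p; case: pickP => [u /and3P[]//|none].
  by have [u] := parent_ex w wS neq_wr; rewrite none.
Qed.

Section ParentTree.

Variables (T : finType) (e : rel T) (S : {set T}) (r : T).
Variables (p : T -> T) (d : T -> nat).
Hypotheses (p_in : {in S, forall w, p w \in S}) (p_root : p r = r).
Hypotheses (p_edge : {in S, forall w, w != r -> e (p w) w})
  (d_p : {in S, forall w, w != r -> d (p w) < d w}).
Hypothesis e_sym : symmetric e.

Definition subtree v := [set w in S | fconnect p w v].

Lemma iter_parent_in w i : w \in S -> iter i p w \in S.
Proof. by move=> wS; elim: i => //= i IHi; apply: p_in. Qed.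

Lemma fconnect_root w : w \in S -> fconnect p w r.
Proof.
have [n] := ubnP (d w); elim: n w => // n IHn w /ltnSE le_dn wS.
have [->|neq_wr] := eqVneq w r; first exact: connect0.
apply: connect_trans (fconnect1 p w) (IHn _ _ (p_in wS)).
by have := d_p wS neq_wr; lia.
Qed.

Lemma subtree_root : subtree r = S.
Proof. by apply/setP=> w; rewrite inE andb_idr // => /fconnect_root. Qed.

Lemma iter_parent_neq_root w v i :
  fconnect p w v -> i < findex p w v -> iter i p w != r.
Proof.
move=> wv lt_ij; apply/eqP=> eq_r.
have eq_vr : v = r.
  by rewrite -(iter_findex wv) -(subnK (ltnW lt_ij)) iterD eq_r iter_fix.
have := findex_iter (ltn_trans lt_ij (findex_max wv)).
by rewrite eq_r -eq_vr => eq_i; rewrite eq_i ltnn in lt_ij.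
Qed.

Lemma subtree_reach_within v w :
  w \in subtree v -> reach_within e (findex p w v) v w.
Proof.
case/setIdP=> wS wv; have := @reach_within_iter _ e p w (findex p w v).
rewrite (iter_findex wv); apply=> i lt_ij.
exact: p_edge (iter_parent_in _ wS) (iter_parent_neq_root wv lt_ij).
Qed.

Lemma findex_le_child_subtree v w : w \in subtree v -> w != v ->
  exists c, [/\ c \in S, c != r, p c = v & findex p w v <= #|subtree c|].
Proof.
case/setIdP=> wS wv neq_wv.
have uniq_iter : uniq (traject p w (findex p w v)).
  by rewrite -(take_traject p w (ltnW (findex_max wv))) take_uniq ?orbit_uniq.
have neq_root := iter_parent_neq_root wv.
case: (findex p w v) (iter_findex wv) uniq_iter neq_root
  => [/= eq_wv|j pj uniq_j neq_root].
  by rewrite eq_wv eqxx in neq_wv.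
exists (iter j p w); split=> //; first exact: iter_parent_in; first exact: neq_root.
rewrite -(size_traject p w j.+1) cardE; apply: uniq_leq_size uniq_j _ => x.
case/trajectP=> i lt_ij ->; rewrite mem_enum inE iter_parent_in //=.
by rewrite -[j](subnK (lt_ij : i <= j)) iterD fconnect_iter.
Qed.

Lemma connected_on_subtreeC v : connected_on e (S :\: subtree v).
Proof.
set S' := S :\: subtree v.
have to_root a : a \in S' -> connect (induced_rel e S') a r.
  have [n] := ubnP (d a); elim: n a => // n IHn a /ltnSE le_dn aS'.
  have [->|neq_ar] := eqVneq a r; first exact: connect0.
  have aS : a \in S by case/setDP: aS'.
  have paS' : p a \in S'.
    move: aS'; rewrite !inE aS p_in // !andbT; apply: contra => pa_v.
    exact: connect_trans (fconnect1 p a) pa_v.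
  apply: connect_trans (connect1 _) (IHn _ _ paS').
    by rewrite /induced_rel /= aS' paS' e_sym p_edge.
  by have := d_p aS neq_ar; lia.
have sym_S' : connect_sym (induced_rel e S').
  by apply: sym_connect_sym => a b; rewrite /induced_rel /= andbCA e_sym.
move=> a b aS' bS'; apply: connect_trans (to_root a aS') _.
by rewrite sym_S' to_root.
Qed.

Hypothesis r_in : r \in S.

Lemma exists_subtree_radius m : 0 < m -> exists v,
  minn m #|S| <= #|subtree v| /\ {in subtree v, forall w, reach_within e m.-1 v w}.
Proof.
move=> m_gt0; pose big v := (v \in S) && (minn m #|S| <= #|subtree v|).
have big_r : big r by rewrite /big r_in subtree_root geq_minr.
have [v /andP[_ big_v] v_max] := arg_maxnP d big_r.
exists v; split=> // w wv; have [->|neq_wv] := eqVneq w v; first by exists [::].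
have [c [cS neq_cr pc le_jc]] := findex_le_child_subtree wv neq_wv.
have [q [pq lq sq]] := subtree_reach_within wv.
exists q; split=> //.
have : ~~ big c by apply/negP=> /v_max; rewrite -pc; have := d_p cS neq_cr; lia.
by rewrite /big cS /= -ltnNge; lia.
Qed.

End ParentTree.

Lemma connected_on_cut (T : finType) (e : rel T) (S : {set T}) r m :
  symmetric e -> connected_on e S -> r \in S -> 0 < m ->
  exists v (D : {set T}), [/\ D \subset S, minn m #|S| <= #|D|,
    connected_on e (S :\: D) & {in D, forall w, reach_within e m.-1 v w}].
Proof.
move=> e_sym connS rS m_gt0.
have [p [d [p_in p_root p_edge d_p]]] := exists_parent_tree connS rS.
have [v [big_v reach_v]] := exists_subtree_radius p_in p_root p_edge d_p rS m_gt0.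
exists v, (subtree S p v); split=> //; first by apply/subsetP=> w /setIdP[].
exact: (connected_on_subtreeC p_in p_edge d_p e_sym (v := v)).
Qed.

Lemma connected_on_ball_cover (T : finType) (e : rel T) (x0 : T) k (S : {set T}) :
  symmetric e -> connected_on e S -> #|S| <= k * k ->
  exists s : seq T, size s = k /\
    {in S, forall u, exists2 i, i < k & reach_within e (2 * (k - i.+1)) (nth x0 s i) u}.
Proof.
move=> e_sym; elim: k S => [|k IHk] S connS le_Sk.
  rewrite leqn0 in le_Sk.
  by exists [::]; split=> // u; rewrite (cards0_eq (eqP le_Sk)) inE.
have [S0|[r rS]] := set_0Vmem S.
  by exists (nseq k.+1 x0); rewrite size_nseq S0; split=> // u; rewrite inE.
have [v [D [sub_DS big_D connSD reach_D]]] :=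
  connected_on_cut e_sym connS rS (ltn0Sn k.*2).
have le_SDk : #|S :\: D| <= k * k.
  by rewrite cardsD (setIidPr sub_DS); move: big_D le_Sk; rewrite -addnn; lia.
have [s [size_s cover_s]] := IHk _ connSD le_SDk.
exists (v :: s); split=> [|u uS]; first by rewrite /= size_s.
have [uD|uND] := boolP (u \in D).
  by exists 0 => //; rewrite subn1 /= mul2n; apply: reach_D.
have uSD : u \in S :\: D by rewrite inE uND uS.
have [i lt_ik reach_i] := cover_s u uSD.
by exists i.+1; rewrite ?subSS.
Qed.

Theorem mainTheorem7 (T : finType) (e : rel T) :
  simple_graph e -> connected_graph e ->
  burning_number (sq_graph e) <= ceil_sqrt #|T|.
Proof.
move=> [e_sym e_irr] connT.
rewrite /ceil_sqrt; case: ex_minnP => k le_Tk k_min.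
rewrite /burning_number; case: ex_minnP => b _ b_min; apply: b_min.
have [x0 _|T0] := pickP T; last first.
  have -> : k = 0 by apply/eqP; rewrite -leqn0 k_min // (eq_card0 T0).
  by apply/existsP; exists [tuple]; apply/eqP/setP => u; have := T0 u.
have connS : connected_on e [set: T].
  move=> a c _ _; apply: connect_sub (connT a c) => x y exy.
  by apply: connect1; rewrite /induced_rel /= !inE.
have le_setT_k : #|[set: T]| <= k * k by rewrite cardsT.
have [s [size_s cover_s]] := connected_on_ball_cover x0 e_sym connS le_setT_k.
apply/existsP; exists (Tuple (introT eqP size_s)); apply/eqP/setP=> u; rewrite inE.
have [i lt_ik reach_i] := cover_s u (in_setT u).
rewrite /burned /= -(cat_take_drop i.+1 s) foldl_cat.
have reach_drop : reach_within e (2 * size (drop i.+1 s)) (nth x0 s i) u.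
  by rewrite size_drop size_s.
apply: (burn_reach_within e_irr _ reach_drop).
apply: (burned_sub _ _ _).2; rewrite -(nth_take x0 (ltnSn i)) mem_nth //.
by rewrite size_takel // size_s.
Qed.
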